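(* (i) Let $1\le k\le n$ and let $f:\mathbb{F}_2^n\to\mathbb{F}_2$ have algebraic degree $k$. Define $g:\mathbb{F}_2^{n+1}\to\mathbb{F}_2$ by $g(x_1,\dots,x_n,x_{n+1})=x_{n+1}f(x_1,\dots,x_n)$. Then $\mathrm{dt}_{k+1}(g)=\big(1-\frac{1}{2^{k+1}}\big)\mathrm{dt}_k(f)$. (ii) Let $1\le k\le n/2$ and let $f:\mathbb{F}_2^n\to\mathbb{F}_2$ be homogeneous of degree $k$. Then $\mathrm{add}_{n-k}(f^c)=\mathrm{add}_k(f)$ and \[\mathrm{dt}_{n-k}(f^c)=\mathrm{dt}_k(f)\prod_{i=k+1}^{n-k}\Big(1-\frac{1}{2^i}\Big).\]
   Context: $\oplus$ denotes addition in $\mathbb{F}_2$ and $\mathbb{F}_2^N$. Every Boolean function $f:\mathbb{F}_2^N\to\mathbb{F}_2$ has a unique algebraic normal form (ANF): a polynomial over $\mathbb{F}_2$ of degree at most one in each variable representing $f$; its degree is the algebraic degree of $f$, and $f$ is homogeneous of degree $k$ if its ANF is nonzero and contains only monomials of degree $k$. For $1\le k\le N$, \[\mathrm{dt}_k(f)=\frac{\big|\{(u_0,\dots,u_k)\in(\mathbb{F}_2^N)^{k+1}:\ \bigoplus_{c_1,\dots,c_k\in\mathbb{F}_2} f\big((\bigoplus_{i=1}^k c_iu_i)\oplus u_0\big)\neq0\}\big|}{2^{(k+1)N}}.\] For $M\in GL(N,\mathbb{F}_2)$, $v\in\mathbb{F}_2^N$, $\varphi_{M,v}(x)=Mx\oplus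 v$. $\mathrm{dd}_k(f)$ is the number of degree-$k$ monomials with nonzero coefficient in the ANF of $f$ divided by $\binom Nk$, and $\mathrm{add}_k(f)=\frac{\sum_{M\in GL(N,\mathbb{F}_2),v\in\mathbb{F}_2^N}\mathrm{dd}_k(f\circ\varphi_{M,v})}{2^N(2^N-1)(2^N-2)\cdots(2^N-2^{N-1})}$. If $f$ is homogeneous of degree $k$ in $n$ variables with ANF $\bigoplus_t b_t t$ ($t$ ranging over degree-$k$ monomials in $x_1,\dots,x_n$), its complement is $f^c=\bigoplus_t b_t\,\frac{x_1\cdots x_n}{t}$ (each monomial replaced by the product of the variables not in it). *)

From mathcomp Require Import all_boot all_order all_algebra.
Set Implicit Arguments. Unset Strict Implicit. Unset Printing Implicit Defensive.
Import GRing.Theory Num.Theory.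
Local Open Scope ring_scope.

Definition vec (N : nat) := 'cV['F_2]_N.
Definition boolfun (N : nat) := vec N -> 'F_2.

Definition anf_eval (N : nat) (a : {ffun {set 'I_N} -> 'F_2}) : boolfun N :=
  fun x => \sum_(S : {set 'I_N}) a S * \prod_(i in S) x i 0.

Definition anf (N : nat) (f : boolfun N) : {ffun {set 'I_N} -> 'F_2} :=
  odflt 0 [pick a : {ffun {set 'I_N} -> 'F_2} | [forall x : vec N, anf_eval a x == f x]].

Definition alg_deg (N : nat) (f : boolfun N) : nat :=
  \max_(S : {set 'I_N} | anf f S != 0) #|S|.

Definition homogeneous (N k : nat) (f : boolfun N) : Prop :=
  anf f != 0 /\ forall S : {set 'I_N}, anf f S != 0 -> #|S| = k.

(* complement: each monomial t replaced by x_1...x_N / t *)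
Definition complement (N : nat) (f : boolfun N) : boolfun N :=
  anf_eval [ffun S : {set 'I_N} => anf f (~: S)].

Definition kderiv (N k : nat) (f : boolfun N) (u0 : vec N) (u : {ffun 'I_k -> vec N}) : 'F_2 :=
  \sum_(c : {ffun 'I_k -> 'F_2}) f ((\sum_(i < k) c i *: u i) + u0).

Definition dt (k N : nat) (f : boolfun N) : rat :=
  (#|[set p : vec N * {ffun 'I_k -> vec N} | kderiv f p.1 p.2 != 0]|%:R
    / (2 ^ ((k + 1) * N))%N%:R)%R.

Definition ddk (k N : nat) (f : boolfun N) : rat :=
  (#|[set S : {set 'I_N} | (#|S| == k) && (anf f S != 0)]|%:R / ('C(N, k))%:R)%R.

Definition affine_comp (N : nat) (f : boolfun N) (M : 'M['F_2]_N) (v : vec N) : boolfun N :=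
  fun x => f (M *m x + v).

Definition addk (k N : nat) (f : boolfun N) : rat :=
  ((\sum_(M : 'M['F_2]_N | M \in unitmx) \sum_(v : vec N) ddk k (affine_comp f M v))
    / ((2 ^ N)%N%:R * \prod_(i < N) ((2 ^ N)%N%:R - (2 ^ i)%N%:R)))%R.

Definition extend_mul (n : nat) (f : boolfun n) : boolfun n.+1 :=
  fun x => x ord_max 0 * f (\col_(i < n) x (widen_ord (leqnSn n) i) 0).

From mathcomp Require Import all_boot all_order all_algebra.
From mathcomp Require Import ring zify.
Set Implicit Arguments. Unset Strict Implicit. Unset Printing Implicit Defensive.
Import GRing.Theory Num.Theory.
Local Open Scope ring_scope.

(* A Boolean function f on F_2^n is studied through its ANF coefficients, which
   are computed by Moebius inversion (anfE), and through the derivative sums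
   dsum f U v = sum_c f(Uc + v) along the columns of a matrix U; dt_K f is a
   normalised count of the pairs (v, U) with dsum f U v <> 0 (dt_count).
   Three facts of linear algebra over F_2 drive everything:
   - a monomial x_S sums to 0 over any affine flat of dimension > |S|, so dsum
     vanishes below the degree and does not depend on v at the degree;
   - for |S| = K, x_S sums over the flat spanned by U to [the S-rows of U form
     an invertible matrix] (sum_monomial_top);
   - if U, U' have full ranks p, q with p + q = n and U^T U' = 0, the S-rows of
     U are invertible iff the complementary rows of U' are (minor_dual).
   Part (i): the derivative of x_{n+1} f along (V;b) is sum_c (b.c) f(Vc + v);
   it vanishes for b = 0 and, by GL-invariance, equals a k-th derivative of f
   for b <> 0.  Part (ii): counting the pairs (U, U') above in two ways relates
   dt_k f and dt_{n-k} f^c through |GL_k(F_2)| and |GL_{n-k}(F_2)|, and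
   f o (Mx + v) and f^c o (M^-T x + v) have complementary ANF supports. *)

Lemma F2_cases (x : 'F_2) : x = 0 \/ x = 1.
Proof. by case: x => [[|[|m]] Hm] //; [left|right]; apply: val_inj. Qed.

Lemma F2_addxx (x : 'F_2) : x + x = 0.
Proof. by case: (F2_cases x) => ->; apply: val_inj. Qed.

Lemma F2_oppr (x : 'F_2) : - x = x.
Proof. by case: (F2_cases x) => ->; apply: val_inj. Qed.

Lemma F2_neq0 (x : 'F_2) : x != 0 -> x = 1.
Proof. by case: (F2_cases x) => ->; rewrite ?eqxx. Qed.

Lemma F2_neq1 (x : 'F_2) : x != 1 -> x = 0.
Proof. by case: (F2_cases x) => ->; rewrite ?eqxx. Qed.

Lemma F2_add_eq0 (x y : 'F_2) : x + y = 0 -> x = y.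
Proof. by move=> H; rewrite -[y]F2_oppr; apply/eqP; rewrite -subr_eq0 opprK H. Qed.

Lemma mxF2_addK m p (A B : 'M['F_2]_(m, p)) : A + B + B = A.
Proof.
have oppB : - B = B by apply/matrixP => i j; rewrite mxE F2_oppr.
by rewrite -{2}oppB addrK.
Qed.

Lemma big_F2 (R : Type) (idx : R) (op : Monoid.com_law idx) (F : 'F_2 -> R) :
  \big[op/idx]_(a : 'F_2) F a = op (F 0) (F 1).
Proof.
rewrite /index_enum /= big_ord_recl big_ord_recl big_ord0 Monoid.mulm1.
by congr (op (F _) (F _)); apply: val_inj.
Qed.

Lemma sum_F2_involution (T : finType) (g : T -> T) (F : T -> 'F_2) :
  involutive g -> (forall x, g x != x) -> (forall x, F (g x) = F x) ->
  \sum_x F x = 0.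
Proof.
move=> gK gneq Fg.
rewrite (bigID (fun x => (enum_rank x < enum_rank (g x))%N)) /=.
set A := \sum_(i | _) _.
suff -> : \sum_(i | ~~ (enum_rank i < enum_rank (g i))%N) F i = A by rewrite F2_addxx.
rewrite (reindex_inj (inv_inj gK)) /= /A; apply: eq_big => [x|x _]; last by rewrite Fg.
rewrite gK -leqNgt leq_eqVlt; case: eqP => //= /val_inj/enum_rank_inj E.
by move: (gneq x); rewrite -E eqxx.
Qed.

Lemma sum_F2_delta (T : finType) (c0 : T) : \sum_(c : T) (c == c0)%:R = 1 :> 'F_2.
Proof. by rewrite (bigD1 c0) //= eqxx big1 ?addr0 // => c /negbTE ->. Qed.

Lemma prod_F2 (I : finType) (S : {pred I}) (x : I -> 'F_2) :
  \prod_(i in S) x i = [forall i in S, x i == 1]%:R.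
Proof.
case: (boolP [forall i in S, x i == 1]) => [/forall_inP H | /forall_inPn [i iS /F2_neq1 xi]].
  by rewrite big1 // => i /H /eqP.
by rewrite (bigD1 i) //= xi mul0r.
Qed.

Lemma card_set_sum (T : finType) (P : pred T) : #|[set x | P x]| = (\sum_(x : T) P x)%N.
Proof. by rewrite -sum1_card big_mkcond; apply: eq_bigr => x _; rewrite inE; case: (P x). Qed.

Lemma card_mxF2 m p : #|{: 'M['F_2]_(m, p)}| = (2 ^ (m * p))%N.
Proof. by rewrite card_mx card_Fp. Qed.

(* The algebraic normal form is the Moebius transform of the truth table.
   Vectors of F_2^n are identified with their supports. *)
Section ANF.
Variable n : nat.

Definition vec_of_set (T : {set 'I_n}) : vec n := \col_i (i \in T)%:R.
Definition vsupp (x : vec n) : {set 'I_n} := [set i | x i 0 == 1].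

Lemma vsuppK T : vsupp (vec_of_set T) = T.
Proof. by apply/setP => i; rewrite !inE mxE; case: (i \in T). Qed.

Lemma vec_of_setK x : vec_of_set (vsupp x) = x.
Proof. by apply/matrixP => i j; rewrite !mxE inE (ord1 j); case: (F2_cases (x i 0)) => ->. Qed.

Lemma monomial_vsupp (S : {set 'I_n}) (x : vec n) :
  \prod_(i in S) x i 0 = (S \subset vsupp x)%:R.
Proof.
rewrite prod_F2; congr ((nat_of_bool _)%:R).
by apply/forall_inP/subsetP => H i /H; rewrite inE.
Qed.

Definition toggle (i : 'I_n) (S : {set 'I_n}) := if i \in S then S :\ i else i |: S.

Lemma in_toggle i S j : (j \in toggle i S) = (if j == i then i \notin S else j \in S).
Proof.
rewrite /toggle; case: (boolP (i \in S)) => iS; rewrite !inE;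
  case: (eqVneq j i) => [->|] //=; by rewrite iS.
Qed.

Lemma sum_interval (T U : {set 'I_n}) :
  \sum_(S : {set 'I_n}) ((T \subset S) && (S \subset U))%:R = (T == U)%:R :> 'F_2.
Proof.
case: (eqVneq T U) => [<-|neTU].
  rewrite (bigD1 T) //= subxx big1 ?addr0 // => S /negbTE neST.
  case: (boolP (T \subset S)) => //= TS; case: (boolP (S \subset T)) => //= ST.
  by move: neST; rewrite (_ : S = T) ?eqxx //; apply/eqP; rewrite eqEsubset ST.
case: (boolP (T \subset U)) => TU; last first.
  rewrite big1 // => S _; case: (boolP (T \subset S)) => //= TS.
  case: (boolP (S \subset U)) => //= SU; by rewrite (subset_trans TS SU) in TU.
have [i iU iT] : exists2 i, i \in U & i \notin T.
  have: ~~ (U \subset T) by apply: contra neTU => UT; rewrite eqEsubset TU UT.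
  by case/subsetPn => i; exists i.
apply: (sum_F2_involution (g := toggle i)).
- move=> S; apply/setP => j; rewrite !in_toggle; case: (eqVneq j i) => [->|] //.
  by rewrite eqxx negbK.
- move=> S; apply/eqP => /setP /(_ i); rewrite in_toggle eqxx; by case: (i \in S).
- move=> S; congr ((nat_of_bool _)%:R); congr (_ && _).
  + apply/subsetP/subsetP => H j jT; have := H j jT; rewrite in_toggle;
      case: (eqVneq j i) => // ji; by rewrite -ji jT in iT.
  + apply/subsetP/subsetP => H j; have := H j; rewrite in_toggle;
      case: (eqVneq j i) => [->|//] _ _; exact iU.
Qed.

Definition mobius (f : boolfun n) : {ffun {set 'I_n} -> 'F_2} :=
  [ffun S : {set 'I_n} => \sum_(T : {set 'I_n} | T \subset S) f (vec_of_set T)].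

Lemma anf_eval_mobius f x : anf_eval (mobius f) x = f x.
Proof.
rewrite /anf_eval.
transitivity (\sum_(T : {set 'I_n}) f (vec_of_set T) * (T == vsupp x)%:R); last first.
  rewrite (bigD1 (vsupp x)) //= eqxx mulr1 vec_of_setK big1 ?addr0 // => T /negbTE ->.
  by rewrite mulr0.
under eq_bigr => S _ do rewrite ffunE monomial_vsupp big_distrl /= big_mkcond /=.
rewrite exchange_big /=; apply: eq_bigr => T _.
rewrite -sum_interval big_distrr /=; apply: eq_bigr => S _.
by case: (T \subset S); case: (S \subset vsupp x); rewrite /= ?mulr0 ?mul0r ?mulr1.
Qed.

Lemma mobius_anf_eval a : mobius (anf_eval a) = a.
Proof.
apply/ffunP => S; rewrite ffunE /anf_eval.
under eq_bigr => T _ do under eq_bigr => R _ do rewrite monomial_vsupp vsuppK.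
transitivity (\sum_(T : {set 'I_n}) \sum_(R : {set 'I_n})
                a R * ((R \subset T) && (T \subset S))%:R).
  rewrite big_mkcond /=; apply: eq_bigr => T _; case: (T \subset S) => /=.
    by apply: eq_bigr => R _; rewrite andbT.
  by rewrite big1 // => R _; rewrite andbF mulr0.
rewrite exchange_big /=.
transitivity (\sum_(R : {set 'I_n}) a R * (R == S)%:R); last first.
  by rewrite (bigD1 S) //= eqxx mulr1 big1 ?addr0 // => T /negbTE ->; rewrite mulr0.
by apply: eq_bigr => R _; rewrite -sum_interval big_distrr.
Qed.

Lemma mobius_ext f g : f =1 g -> mobius f = mobius g.
Proof. by move=> H; apply/ffunP => S; rewrite !ffunE; apply: eq_bigr => T _; rewrite H. Qed.

Lemma anfE f : anf f = mobius f.
Proof.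
rewrite /anf; case: pickP => [a /forallP H | H] /=.
  by rewrite -(mobius_anf_eval a); apply: mobius_ext => x; apply/eqP/H.
by move: (H (mobius f)) => /negbT /forallPn [x]; rewrite anf_eval_mobius eqxx.
Qed.

Lemma anf_evalK (f : boolfun n) (x : vec n) : anf_eval (anf f) x = f x.
Proof. by rewrite anfE anf_eval_mobius. Qed.

Lemma anf_complement (f : boolfun n) (S : {set 'I_n}) : anf (complement f) S = anf f (~: S).
Proof. by rewrite anfE mobius_anf_eval ffunE. Qed.

Definition deg_le (K : nat) (f : boolfun n) := forall S, anf f S != 0 -> (#|S| <= K)%N.

Lemma deg_le_homog K (f : boolfun n) : (forall S, anf f S != 0 -> #|S| = K) -> deg_le K f.
Proof. by move=> Hf S /Hf ->. Qed.

End ANF.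

Section DerivativeSums.
Variable n : nat.

(* The sum of f over the affine flat v + (column space of U), with multiplicity. *)
Definition dsum K (f : boolfun n) (U : 'M['F_2]_(n, K)) (v : vec n) : 'F_2 :=
  \sum_(c : 'cV['F_2]_K) f (U *m c + v).

Lemma dsum_ext K (f g : boolfun n) (U : 'M['F_2]_(n, K)) v : f =1 g -> dsum f U v = dsum g U v.
Proof. by move=> H; apply: eq_bigr => c _; rewrite H. Qed.

(* E_S : the isometric embedding F_2^S -> F_2^n; its transpose extracts S-rows. *)
Definition coord_mx (S : {set 'I_n}) : 'M['F_2]_(n, #|S|) :=
  \matrix_(i, a) (i == enum_val a)%:R.

Lemma coord_mxT_mul (S : {set 'I_n}) m (Y : 'M['F_2]_(n, m)) a j :
  ((coord_mx S)^T *m Y) a j = Y (enum_val a) j.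
Proof.
rewrite mxE (bigD1 (enum_val a)) //= !mxE eqxx mul1r big1 ?addr0 // => i /negbTE.
by rewrite !mxE => ->; rewrite mul0r.
Qed.

Lemma coord_mx_mul_in (S : {set 'I_n}) m (w : 'M['F_2]_(#|S|, m)) a j :
  (coord_mx S *m w) (enum_val a) j = w a j.
Proof.
rewrite mxE (bigD1 a) //= mxE eqxx mul1r big1 ?addr0 // => b /negbTE nb.
by rewrite mxE (inj_eq enum_val_inj) eq_sym nb mul0r.
Qed.

Lemma coord_mx_mul_out (S : {set 'I_n}) m (w : 'M['F_2]_(#|S|, m)) i j :
  i \notin S -> (coord_mx S *m w) i j = 0.
Proof.
move=> iS; rewrite mxE big1 // => a _; rewrite mxE.
case: eqP => [E|]; last by rewrite mul0r.
by move: iS; rewrite E enum_valP.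
Qed.

Lemma coord_mxTK (S : {set 'I_n}) : (coord_mx S)^T *m coord_mx S = 1%:M.
Proof. by apply/matrixP => a b; rewrite coord_mxT_mul !mxE (inj_eq enum_val_inj). Qed.

Lemma coord_mxT_disjoint (S T : {set 'I_n}) :
  [disjoint S & T] -> (coord_mx S)^T *m coord_mx T = 0.
Proof.
move=> dST; apply/matrixP => a b; rewrite coord_mxT_mul !mxE.
case: eqP => // E; have := disjointFr dST (enum_valP a).
by rewrite E enum_valP.
Qed.

Lemma coord_mxT_eq0 (S : {set 'I_n}) (y : vec n) :
  ((coord_mx S)^T *m y == 0) = [forall i in S, y i 0 == 0].
Proof.
apply/eqP/forall_inP => [H i iS | H].
  move/matrixP: H => /(_ (enum_rank_in iS i) 0).
  by rewrite coord_mxT_mul enum_rankK_in // mxE => ->.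
by apply/matrixP => a j; rewrite coord_mxT_mul !mxE (ord1 j); apply/eqP/H/enum_valP.
Qed.

Lemma rank_coord_mx (S : {set 'I_n}) : \rank (coord_mx S) = #|S|.
Proof.
apply/eqP; rewrite eqn_leq rank_leq_col /=.
by rewrite -{1}(mxrank1 'F_2 #|S|) -(coord_mxTK S) mxrankM_maxr.
Qed.

Lemma ker_nonzero m p (B : 'M['F_2]_(m, p)) :
  ~~ row_free B -> exists2 z : 'rV_m, z != 0 & z *m B = 0.
Proof.
rewrite -kermx_eq0 => K0.
case: (pickP (fun i => row i (kermx B) != 0)) => [i Hi | H].
  by exists (row i (kermx B)) => //; rewrite -row_mul mulmx_ker row0.
case/negP: K0; apply/eqP/row_matrixP => i; rewrite row0; apply/eqP.
by move: (H i) => /negbFE.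
Qed.

Lemma sum_F2_kernel K (F : 'cV['F_2]_K -> 'F_2) (z : 'cV['F_2]_K) :
  z != 0 -> (forall c, F (c + z) = F c) -> \sum_c F c = 0.
Proof.
move=> z0 Fz; apply: (sum_F2_involution (g := fun c => c + z)) => // c.
- exact: mxF2_addK.
- by apply: contra z0 => /eqP E; apply/eqP; apply: (addrI c); rewrite addr0.
Qed.

Lemma sum_monomial_low K (U : 'M['F_2]_(n, K)) (v : vec n) (S : {set 'I_n}) :
  (#|S| < K)%N -> \sum_(c : 'cV['F_2]_K) \prod_(i in S) (U *m c + v) i 0 = 0.
Proof.
move=> SK; set B := (coord_mx S)^T *m U.
have : ~~ row_free B^T.
  rewrite /row_free mxrank_tr; apply: contraL SK => /eqP <-.
  by rewrite -leqNgt rank_leq_row.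
case/ker_nonzero => z z0 zB.
have Bz : forall i, i \in S -> (U *m z^T) i 0 = 0.
  have : (coord_mx S)^T *m (U *m z^T) == 0.
    by rewrite mulmxA -/B -[B]trmxK -trmx_mul zB trmx0.
  by rewrite coord_mxT_eq0 => /forall_inP H i /H /eqP.
apply: (sum_F2_kernel (z := z^T)); first by rewrite trmx_eq0.
move=> c; apply: eq_bigr => i iS.
by rewrite mulmxDr [in LHS]mxE [in X in X + _ = _]mxE Bz // addr0 !mxE.
Qed.

Lemma dsum_anf K (f : boolfun n) (U : 'M['F_2]_(n, K)) v :
  dsum f U v = \sum_S anf f S * \sum_(c : 'cV['F_2]_K) \prod_(i in S) (U *m c + v) i 0.
Proof.
rewrite (dsum_ext _ _ (fun x => esym (anf_evalK f x))) /dsum /anf_eval exchange_big /=.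
by apply: eq_bigr => S _; rewrite -big_distrr.
Qed.

Lemma dsum_deg_lt K (f : boolfun n) (U : 'M['F_2]_(n, K)) v :
  (forall S, anf f S != 0 -> (#|S| < K)%N) -> dsum f U v = 0.
Proof.
move=> Hf; rewrite dsum_anf big1 // => S _.
case: (eqVneq (anf f S) 0) => [->|/Hf]; first by rewrite mul0r.
by move/sum_monomial_low => ->; rewrite mulr0.
Qed.

Lemma big_col_mx (R : Type) (idx : R) (op : Monoid.com_law idx) (m1 m2 p : nat)
    (F : 'M['F_2]_(m1 + m2, p) -> R) :
  \big[op/idx]_(c : 'M_(m1 + m2, p)) F c =
  \big[op/idx]_(x : 'M_(m1, p)) \big[op/idx]_(y : 'M_(m2, p)) F (col_mx x y).
Proof.
rewrite pair_bigA /= (reindex (fun pr : 'M_(m1, p) * 'M_(m2, p) => col_mx pr.1 pr.2)) //=.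
exists (fun c => (usubmx c, dsubmx c)) => [[x y] _|c _] /=.
  by rewrite col_mxKu col_mxKd.
by rewrite vsubmxK.
Qed.

Lemma big_row_mx (R : Type) (idx : R) (op : Monoid.com_law idx) (m p1 p2 : nat)
    (F : 'M['F_2]_(m, p1 + p2) -> R) :
  \big[op/idx]_(V : 'M_(m, p1 + p2)) F V =
  \big[op/idx]_(V1 : 'M_(m, p1)) \big[op/idx]_(V2 : 'M_(m, p2)) F (row_mx V1 V2).
Proof.
rewrite pair_bigA /= (reindex (fun pr : 'M_(m, p1) * 'M_(m, p2) => row_mx pr.1 pr.2)) //=.
exists (fun V => (lsubmx V, rsubmx V)) => [[x y] _|V _] /=.
  by rewrite row_mxKl row_mxKr.
by rewrite hsubmxK.
Qed.

Lemma sum_cV1 (G : 'cV['F_2]_1 -> 'F_2) : \sum_x G x = G 0 + G (const_mx 1).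
Proof.
rewrite (reindex (fun a : 'F_2 => const_mx a)) /=; last first.
  exists (fun x : 'cV_1 => x 0 0) => [a _|x _]; first by rewrite mxE.
  by apply/matrixP => i j; rewrite !ord1 mxE.
rewrite big_F2; congr (G _ + _); by apply/matrixP => i j; rewrite !mxE.
Qed.

(* At the degree, the derivative does not depend on the base point: the flat
   spanned by (v, U) splits into the flats based at 0 and at v. *)
Lemma dsum_base_free K (f : boolfun n) (U : 'M['F_2]_(n, K)) v :
  deg_le K f -> dsum f U v = dsum f U 0.
Proof.
move=> Hf; have := @dsum_deg_lt (1 + K) f (row_mx v U) 0.
rewrite /dsum big_col_mx sum_cV1 => /(_ Hf) H.
apply: esym; apply: F2_add_eq0; rewrite -[RHS]H; congr (_ + _).
  by apply: eq_bigr => c _; rewrite mul_row_col mulmx0 add0r.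
apply: eq_bigr => c _; rewrite mul_row_col addr0 addrC; congr (f (_ + _)).
by apply/matrixP => i j; rewrite !mxE (ord1 j) big_ord1 mxE mulr1.
Qed.

(* A monomial of degree K sums over the K-flat spanned by U to the indicator
   that the S-rows of U are invertible: otherwise a kernel vector pairs terms,
   and if they are, exactly one point of the flat is 1 on all of S. *)
Lemma sum_monomial_top K (U : 'M['F_2]_(n, K)) (S : {set 'I_n}) : #|S| = K ->
  \sum_(c : 'cV['F_2]_K) \prod_(i in S) (U *m c) i 0 =
    (\rank ((coord_mx S)^T *m U) == K)%:R.
Proof.
move=> SK; set B := (coord_mx S)^T *m U.
have E (c : 'cV['F_2]_K) : \prod_(i in S) (U *m c) i 0 = (B *m c == const_mx 1)%:R.
  rewrite (prod_F2 S (fun i => (U *m c) i 0)); congr ((nat_of_bool _)%:R).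
  apply/forall_inP/eqP => [H | H i iS].
    apply/matrixP => a j; rewrite -mulmxA coord_mxT_mul (ord1 j) [const_mx _ _ _]mxE.
    by apply/eqP; apply: H; apply: enum_valP.
  move/matrixP: H => /(_ (enum_rank_in iS i) 0).
  by rewrite -mulmxA coord_mxT_mul enum_rankK_in // [const_mx _ _ _]mxE => ->.
under eq_bigr => c _ do rewrite E.
case: (boolP (\rank B == K)) => rB.
  have fr : row_free B^T by rewrite /row_free mxrank_tr.
  have fl : row_full B^T by rewrite /row_full mxrank_tr (eqP rB) SK.
  have /submxP [D HD] : ((const_mx 1 : 'rV['F_2]_#|S|) <= B^T)%MS by apply: submx_full.
  have BD : B *m D^T = const_mx 1 by rewrite -[B]trmxK -trmx_mul -HD trmx_const.
  transitivity (\sum_(c : 'cV['F_2]_K) (c == D^T)%:R : 'F_2); last exact: sum_F2_delta.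
  apply: eq_bigr => c _; congr ((nat_of_bool _)%:R).
  apply/eqP/eqP => [Hc | ->] //.
  have : (c - D^T)^T *m B^T == 0 by rewrite -trmx_mul mulmxBr Hc BD subrr trmx0.
  by rewrite mulmx_free_eq0 // trmx_eq0 subr_eq0 => /eqP.
have : ~~ row_free B^T by rewrite /row_free mxrank_tr.
case/ker_nonzero => z z0 zB.
apply: (sum_F2_kernel (z := z^T)); first by rewrite trmx_eq0.
have Bz : B *m z^T = 0 by rewrite -[B]trmxK -trmx_mul zB trmx0.
by move=> c; rewrite mulmxDr Bz addr0.
Qed.

Lemma dsum_homog K (f : boolfun n) (U : 'M['F_2]_(n, K)) :
  (forall S, anf f S != 0 -> #|S| = K) ->
  dsum f U 0 = \sum_S anf f S * (\rank ((coord_mx S)^T *m U) == K)%:R.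
Proof.
move=> Hf; rewrite dsum_anf; apply: eq_bigr => S _.
case: (eqVneq (anf f S) 0) => [->|/Hf SK]; first by rewrite !mul0r.
by under eq_bigr => c _ do rewrite addr0; rewrite sum_monomial_top.
Qed.

Lemma dsum_homog_rank K (f : boolfun n) (U : 'M['F_2]_(n, K)) :
  (forall S, anf f S != 0 -> #|S| = K) -> dsum f U 0 != 0 -> \rank U = K.
Proof.
move=> Hf; apply: contraNeq => rU; apply/eqP; rewrite dsum_homog // big1 // => S _.
have : (\rank ((coord_mx S)^T *m U) < K)%N.
  apply: leq_ltn_trans (mxrankM_maxr _ _) _.
  by rewrite ltn_neqAle rU rank_leq_col.
by rewrite ltn_neqAle => /andP [/negbTE -> _]; rewrite mulr0.
Qed.

End DerivativeSums.

Section Duality.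
Variable n : nat.

Lemma card_setC_eq (S : {set 'I_n}) p q : (p + q = n)%N -> #|S| = p -> #|~: S| = q.
Proof.
move=> pq Sp; apply/eqP; rewrite -(eqn_add2l p) -{1}Sp cardsC card_ord pq.
by [].
Qed.

(* If the S-rows of U are singular, a kernel vector w lifts to y = E_S w, which
   is orthogonal to U, hence lies in the column space of U', say y = U' x; then
   x is a kernel vector of the complementary rows of U'. *)
Lemma minor_dual_imp p q (U : 'M['F_2]_(n, p)) (U' : 'M['F_2]_(n, q)) (S : {set 'I_n}) :
  (p + q = n)%N -> \rank U = p -> \rank U' = q -> U^T *m U' = 0 -> #|S| = p ->
  \rank ((coord_mx S)^T *m U) != p -> \rank ((coord_mx (~: S))^T *m U') != q.
Proof.
move=> pq rU rU' UU' Sp rB.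
set B := (coord_mx S)^T *m U.
have : ~~ row_free B by apply/negP => /eqP E; move: rB; rewrite E Sp eqxx.
case/ker_nonzero => w w0 wB.
set y := coord_mx S *m w^T.
have Ey : (coord_mx S)^T *m y = w^T by rewrite mulmxA coord_mxTK mul1mx.
have y0 : y != 0 by apply: contra w0 => /eqP y0; rewrite -[w]trmxK -Ey y0 mulmx0 trmx0.
have yU : y^T *m U = 0 by rewrite /y trmx_mul trmxK -mulmxA wB.
have sK : (y^T <= kermx U)%MS by rewrite sub_kermx yU.
have U'K : (U'^T <= kermx U)%MS.
  by rewrite sub_kermx -[U'^T *m U]trmxK trmx_mul trmxK UU' trmx0.
have rK : \rank (kermx U) = q by rewrite mxrank_ker rU -pq addKn.
have KU' : (kermx U <= U'^T)%MS.
  have := (mxrank_leqif_eq U'K).2; rewrite mxrank_tr rU' rK eqxx => /esym/andP [].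
  by [].
have /submxP [x Hx] : (y^T <= U'^T)%MS by apply: submx_trans sK KU'.
have x0 : x != 0 by apply: contra y0 => /eqP x0; rewrite -[y]trmxK Hx x0 mul0mx trmx0.
set B' := (coord_mx (~: S))^T *m U'.
have Uy : U' *m x^T = y by rewrite -[y]trmxK Hx trmx_mul trmxK.
have B'x : B' *m x^T = 0.
  rewrite /B' -mulmxA Uy /y mulmxA coord_mxT_disjoint ?mul0mx //.
  by rewrite disjoints_subset subxx.
apply/negP => /eqP rB'.
have : row_free B'^T by rewrite /row_free mxrank_tr rB'.
move/(mulmx_free_eq0 x); rewrite -[x *m _]trmxK trmx_mul trmxK B'x trmx0 eqxx.
by move/esym/eqP => E; rewrite E eqxx in x0.
Qed.

Lemma minor_dual p q (U : 'M['F_2]_(n, p)) (U' : 'M['F_2]_(n, q)) (S : {set 'I_n}) :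
  (p + q = n)%N -> \rank U = p -> \rank U' = q -> U^T *m U' = 0 -> #|S| = p ->
  (\rank ((coord_mx S)^T *m U) == p) = (\rank ((coord_mx (~: S))^T *m U') == q).
Proof.
move=> pq rU rU' UU' Sp; apply/idP/idP => H; last by apply: contraLR H; apply: minor_dual_imp.
apply: contraLR H => H'; have := @minor_dual_imp q p U' U (~: S).
rewrite setCK; apply => //; first by rewrite addnC.
  by rewrite -[U'^T *m U]trmxK trmx_mul trmxK UU' trmx0.
exact: card_setC_eq pq Sp.
Qed.

Lemma complement_homog p q (f g : boolfun n) :
  (p + q = n)%N -> (forall S, anf f S != 0 -> #|S| = p) ->
  (forall S, anf g S = anf f (~: S)) -> forall S, anf g S != 0 -> #|S| = q.
Proof. by move=> pq Hf Hg S; rewrite Hg => /Hf /(card_setC_eq pq); rewrite setCK. Qed.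

Lemma dsum_dual p q (f g : boolfun n) (U : 'M['F_2]_(n, p)) (U' : 'M['F_2]_(n, q)) :
  (p + q = n)%N -> \rank U = p -> \rank U' = q -> U^T *m U' = 0 ->
  (forall S, anf f S != 0 -> #|S| = p) -> (forall S, anf g S = anf f (~: S)) ->
  dsum g U' 0 = dsum f U 0.
Proof.
move=> pq rU rU' UU' Hf Hg; have Hc := complement_homog pq Hf Hg.
rewrite (dsum_homog U' Hc) (dsum_homog U Hf) (reindex_inj (@setC_inj _)) /=.
apply: eq_bigr => S _; rewrite Hg setCK.
case: (eqVneq (anf f S) 0) => [->|/Hf Sp]; first by rewrite !mul0r.
by rewrite (minor_dual pq rU rU' UU' Sp).
Qed.

End Duality.

Section Counting.
Variable n : nat.

Definition num_GL m := #|[set M : 'M['F_2]_m | M \in unitmx]|.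

Lemma card_bases r (B : 'M['F_2]_(r, n)) : row_free B ->
  #|[set Y : 'M['F_2]_(r, n) | row_free Y && (Y <= B)%MS]| = num_GL r.
Proof.
move=> fB; rewrite /num_GL -(card_imset _ (row_free_inj fB)).
apply: eq_card => Y; rewrite inE.
apply/andP/imsetP => [[fY /submxP [D eY]] | [G]].
  exists D => //; rewrite inE -row_free_unit; by move: fY; rewrite /row_free eY mxrankMfree.
rewrite inE => uG ->; split; last exact: submxMl.
by rewrite /row_free mxrankMfree // mxrank_unit.
Qed.

Lemma card_perp_bases p q (A : 'M['F_2]_(n, p)) : (p + q = n)%N -> \rank A = p ->
  #|[set X : 'M['F_2]_(n, q) | (\rank X == q) && (A^T *m X == 0)]| = num_GL q.
Proof.
move=> pq rA.
have -> : #|[set X : 'M['F_2]_(n, q) | (\rank X == q) && (A^T *m X == 0)]| =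
          #|[set Y : 'M['F_2]_(q, n) | row_free Y && (Y <= kermx A)%MS]|.
  rewrite !card_set_sum (reindex (@trmx _ q n)) /=.
    apply: eq_bigr => Y _; rewrite /row_free mxrank_tr sub_kermx -trmx_mul trmx_eq0.
    by [].
  by exists (@trmx _ n q) => Y _; rewrite trmxK.
have rK : \rank (kermx A) = q by rewrite mxrank_ker rA -pq addKn.
move: (row_base (kermx A)) (row_base_free (kermx A)) (eq_row_base (kermx A)).
rewrite rK => B fB eB; rewrite -(card_bases fB).
by apply: eq_card => Y; rewrite !inE eB.
Qed.

End Counting.

Lemma num_GL_gt0 m : (0 < num_GL m)%N.
Proof. by apply/card_gt0P; exists 1%:M; rewrite inE unitmx1. Qed.

Lemma num_GLE m : (0 < m)%N ->
  (num_GL m)%:R = 2%:R ^+ (m * m) * \prod_(1 <= i < m.+1) (1 - ((2 ^ i)%N%:R)^-1) :> rat.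
Proof.
case: m => // m _.
have -> : num_GL m.+1 = (2 ^ 'C(m.+1, 2) * \prod_(1 <= i < m.+2) (2 ^ i - 1))%N.
  transitivity #|GLgroup m.+1 'F_2|; last by rewrite card_GL ?card_Fp.
  by rewrite cardsT /= card_sub; apply: eq_card => A; rewrite inE.
elim: m.+1 => [|m' IH]; first by rewrite !big_geq // mul1r.
rewrite big_nat_recr //= [in RHS]big_nat_recr //= binS bin1 expnD mulnACA natrM IH.
rewrite natrM natrB ?expn_gt0 // !natrX.
rewrite (_ : (m'.+1 * m'.+1 = m' * m' + m' + m'.+1)%N); last by nia.
rewrite !exprD.
have h2 : (2%:R : rat) != 0 by [].
field; by rewrite ?expf_neq0.
Qed.

Section Density.
Variable n : nat.

Definition dir_mx K (u : {ffun 'I_K -> vec n}) : 'M['F_2]_(n, K) := \matrix_(i, j) u j i 0.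

Lemma kderivE K (f : boolfun n) (u0 : vec n) (u : {ffun 'I_K -> vec n}) :
  kderiv f u0 u = dsum f (dir_mx u) u0.
Proof.
rewrite /kderiv /dsum (reindex (fun c : 'cV['F_2]_K => [ffun j => c j 0])) /=; last first.
  exists (fun c : {ffun 'I_K -> 'F_2} => \col_j c j) => [c _|c _].
    by apply/matrixP => i j; rewrite !mxE ffunE (ord1 j).
  by apply/ffunP => j; rewrite !ffunE mxE.
apply: eq_bigr => c _; congr (f (_ + _)).
apply/matrixP => i j; rewrite summxE !mxE (ord1 j); apply: eq_bigr => l _.
by rewrite ffunE !mxE mulrC.
Qed.

Definition nz_dsums K (f : boolfun n) : nat :=
  \sum_(v : vec n) \sum_(U : 'M['F_2]_(n, K)) (dsum f U v != 0%R).

Definition nz_dsums0 K (f : boolfun n) : nat :=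
  \sum_(U : 'M['F_2]_(n, K)) (dsum f U 0%R != 0%R).

Lemma dt_count K (f : boolfun n) : dt K f = (nz_dsums K f)%:R / (2 ^ ((K + 1) * n))%N%:R.
Proof.
rewrite /dt card_set_sum.
rewrite -(pair_big predT predT
  (fun (u0 : vec n) (u : {ffun 'I_K -> vec n}) => nat_of_bool (kderiv f u0 u != 0))) /=.
congr (_%:R / _); apply: eq_bigr => u0 _.
rewrite (reindex (@dir_mx K)) /=; last first.
  exists (fun U : 'M['F_2]_(n, K) => [ffun j => col j U]) => [u _|U _].
    by apply/ffunP => j; rewrite ffunE; apply/matrixP => i l; rewrite !mxE (ord1 l).
  by apply/matrixP => i j; rewrite !mxE ffunE mxE.
by apply: eq_bigr => u _; rewrite kderivE.
Qed.

Lemma nz_dsums_base_free K (f : boolfun n) : deg_le K f -> nz_dsums K f = (2 ^ n * nz_dsums0 K f)%N.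
Proof.
move=> Hf; rewrite /nz_dsums.
under eq_bigr => v _ do under eq_bigr => U _ do rewrite (dsum_base_free U v Hf).
by rewrite sum_nat_const card_mxF2 muln1.
Qed.

End Density.

Section LastRow.
Variable n : nat.

Definition rjoin m (A : 'M['F_2]_(n, m)) (r : 'rV['F_2]_m) : 'M['F_2]_(n.+1, m) :=
  \matrix_(i, j) if unlift ord_max i is Some i' then A i' j else r 0 j.

Lemma widen_lift (i : 'I_n) : widen_ord (leqnSn n) i = lift ord_max i.
Proof. by apply: val_inj; rewrite /= /bump leqNgt ltn_ord. Qed.

Lemma big_rjoin (R : Type) (idx : R) (op : Monoid.com_law idx) m
    (F : 'M['F_2]_(n.+1, m) -> R) :
  \big[op/idx]_(X : 'M['F_2]_(n.+1, m)) F X =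
  \big[op/idx]_(A : 'M['F_2]_(n, m)) \big[op/idx]_(r : 'rV['F_2]_m) F (rjoin A r).
Proof.
rewrite pair_bigA /= (reindex (fun pr : 'M['F_2]_(n, m) * 'rV['F_2]_m => rjoin pr.1 pr.2)) //=.
exists (fun X : 'M['F_2]_(n.+1, m) =>
          (\matrix_(i < n, j < m) X (widen_ord (leqnSn n) i) j, \row_j X ord_max j)).
  move=> [A r] _ /=; congr (_, _); apply/matrixP => i j; rewrite !mxE.
    by rewrite widen_lift liftK.
  by rewrite (ord1 i) unlift_none.
move=> X _; apply/matrixP => i j; rewrite !mxE.
case: unliftP => [i' ->|->] //=.
by rewrite mxE widen_lift.
Qed.

Lemma rjoin_mul m p (A : 'M['F_2]_(n, m)) r (B : 'M['F_2]_(m, p)) :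
  rjoin A r *m B = rjoin (A *m B) (r *m B).
Proof.
apply/matrixP => i j; rewrite !mxE; case: unliftP => [i' ->|->] /=.
  by rewrite mxE; apply: eq_bigr => l _; rewrite mxE liftK.
by apply: eq_bigr => l _; rewrite mxE unlift_none.
Qed.

Lemma rjoin_add m A r A' r' : @rjoin m A r + rjoin A' r' = rjoin (A + A') (r + r').
Proof. by apply/matrixP => i j; rewrite !mxE; case: (unlift ord_max i) => [i'|]; rewrite ?mxE. Qed.

Lemma extend_mul_rjoin (f : boolfun n) (x : vec n) (y : 'rV['F_2]_1) :
  extend_mul f (rjoin x y) = y 0 0 * f x.
Proof.
rewrite /extend_mul mxE unlift_none; congr (_ * f _).
by apply/matrixP => i j; rewrite !mxE (ord1 j) widen_lift liftK.
Qed.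

End LastRow.

Lemma row_F2_basis_change m (b : 'rV['F_2]_m) :
  b != 0 -> exists2 R : 'M['F_2]_m, R \in unitmx & pid_mx 1 *m R = b.
Proof.
move=> b0; have rb : \rank b = 1%N.
  by apply/eqP; rewrite eqn_leq rank_leq_row lt0n mxrank_eq0 b0.
have C1 : col_ebase b = 1%:M.
  have := col_ebase_unit b; rewrite unitmxE det_mx11 unitfE => /F2_neq0 C1.
  by apply/matrixP => i j; rewrite !ord1 C1 mxE.
have eb := mulmx_ebase b; rewrite rb C1 mul1mx in eb.
by exists (row_ebase b); rewrite ?row_ebase_unit.
Qed.

Section ExtendMul.
Variables (n k : nat) (f : boolfun n).
Hypothesis deg_f : deg_le k f.

(* The derivative of g along (V; b) at (v; b0), see dsum_extend_mul. *)
Definition twisted_dsum (V : 'M['F_2]_(n, k.+1)) (v : vec n) (b : 'rV['F_2]_k.+1) : 'F_2 :=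
  \sum_(c : 'cV['F_2]_k.+1) (b *m c) 0 0 * f (V *m c + v).

Lemma dsum_extend_mul V b v b0 :
  dsum (extend_mul f) (rjoin V b) (rjoin v b0) = twisted_dsum V v b.
Proof.
rewrite /dsum; under eq_bigr => c _ do rewrite rjoin_mul rjoin_add extend_mul_rjoin.
under eq_bigr => c _ do rewrite mxE mulrDl.
(* deg f <= k < k + 1, so the b0-part is a vanishing derivative of f. *)
by rewrite big_split /= -big_distrr /= -/(dsum f V v) (@dsum_deg_lt n k.+1 f V v deg_f) mulr0 addr0.
Qed.

Lemma twisted_dsum_GL (G : 'M['F_2]_k.+1) V v b :
  G \in unitmx -> twisted_dsum V v b = twisted_dsum (V *m G) v (b *m G).
Proof.
move=> uG; rewrite /twisted_dsum (reindex_inj (can_inj (mulKmx uG))) /=.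
by apply: eq_bigr => c _; rewrite !mulmxA.
Qed.

Definition nz_twisted (b : 'rV['F_2]_k.+1) : nat :=
  \sum_(v : vec n) \sum_(V : 'M['F_2]_(n, k.+1)) (twisted_dsum V v b != 0%R).

Lemma nz_twisted0 : nz_twisted 0 = 0%N.
Proof.
rewrite /nz_twisted big1 // => v _; rewrite big1 // => V _.
by rewrite /twisted_dsum big1 ?eqxx // => c _; rewrite mul0mx mxE mul0r.
Qed.

(* Along e_1 the twisted sum only sees c with c_1 = 1: it is the k-th
   derivative of f along the last k columns at base v + first column. *)
Lemma nz_twisted_e1 : nz_twisted (pid_mx 1) = (2 ^ n * nz_dsums k f)%N.
Proof.
have e1c (c : 'cV['F_2]_k.+1) : ((pid_mx 1 : 'rV['F_2]_k.+1) *m c) 0 0 = c 0 0.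
  rewrite mxE (bigD1 ord0) //= big1 ?addr0; first by rewrite mxE /= mul1r.
  by move=> j /negbTE nj; rewrite mxE /=; case: j nj => [[|j'] Hj] //= _; rewrite mul0r.
have c00 (x : 'cV['F_2]_1) (y : 'cV['F_2]_k) : col_mx x y (0 : 'I_k.+1) 0 = x 0 0.
  by rewrite (_ : (0 : 'I_k.+1) = lshift k (0 : 'I_1)) ?col_mxEu //; apply: ord_inj.
transitivity (\sum_(v : vec n) \sum_(V1 : 'M['F_2]_(n, 1)) \sum_(V' : 'M['F_2]_(n, k))
                (dsum f V' (V1 + v)%R != 0%R))%N.
  apply: eq_bigr => v _; rewrite (big_row_mx _ (p1 := 1) (p2 := k)); apply: eq_bigr => V1 _.
  apply: eq_bigr => V' _; congr (nat_of_bool (_ != 0)).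
  rewrite /twisted_dsum /dsum (big_col_mx _ (m1 := 1) (m2 := k)) sum_cV1 big1 ?add0r; last first.
    by move=> y _; rewrite e1c c00 mxE mul0r.
  apply: eq_bigr => y _; rewrite e1c c00 mxE mul1r (mul_row_col V1 V'); congr f.
  rewrite addrAC addrC; congr (_ + _).
  by apply/matrixP => i j; rewrite !mxE (ord1 j) big_ord1 mxE mulr1.
rewrite exchange_big /=.
transitivity (\sum_(V1 : 'M['F_2]_(n, 1)) nz_dsums k f)%N; last first.
  by rewrite sum_nat_const card_mxF2 muln1.
by apply: eq_bigr => V1 _; rewrite /nz_dsums [RHS](reindex_inj (addrI V1)).
Qed.

Lemma nz_twisted_nz b : b != 0 -> nz_twisted b = (2 ^ n * nz_dsums k f)%N.
Proof.
case/row_F2_basis_change => R uR <-; rewrite -nz_twisted_e1 /nz_twisted.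
apply: eq_bigr => v _; rewrite (reindex_inj (can_inj (mulmxK uR))) /=.
by apply: eq_bigr => V _; rewrite -twisted_dsum_GL.
Qed.

(* Each of the 2^(k+1) - 1 nonzero b contributes equally, b0 is free. *)
Lemma nz_dsums_extend_mul :
  nz_dsums k.+1 (extend_mul f) = (2 * ((2 ^ k.+1 - 1) * (2 ^ n * nz_dsums k f)))%N.
Proof.
rewrite /nz_dsums big_rjoin.
transitivity (\sum_(v : 'M['F_2]_(n, 1)) \sum_(b0 : 'rV['F_2]_1)
               \sum_(V : 'M['F_2]_(n, k.+1)) \sum_(b : 'rV['F_2]_k.+1)
                 (twisted_dsum V v b != 0%R))%N.
  apply: eq_bigr => v _; apply: eq_bigr => b0 _; rewrite big_rjoin; apply: eq_bigr => V _.
  by apply: eq_bigr => b _; rewrite dsum_extend_mul.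
under eq_bigr => v _ do rewrite sum_nat_const card_mxF2.
rewrite -big_distrr /= muln1 expn1; congr (2 * _)%N.
under eq_bigr => v _ do rewrite exchange_big /=.
rewrite exchange_big /= (bigD1 0) //= -/(nz_twisted 0) nz_twisted0 add0n.
under eq_bigr => b b0 do rewrite -/(nz_twisted b) (nz_twisted_nz b0).
by rewrite sum_nat_const cardC1 card_mxF2 mul1n subn1.
Qed.

End ExtendMul.

Lemma dt_extend_mul n k (f : boolfun n) : deg_le k f ->
  dt k.+1 (extend_mul f) = (1 - ((2 ^ k.+1)%N%:R)^-1) * dt k f.
Proof.
move=> deg_f; rewrite !dt_count nz_dsums_extend_mul //.
rewrite (_ : ((k.+1 + 1) * n.+1 = 1 + k.+1 + n + (k + 1) * n)%N); last by nia.
rewrite !expnD expn1 !natrM natrB ?expn_gt0 //.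
have h2 : (2%:R : rat) != 0 by [].
field; by rewrite !pnatr_eq0 !expn_eq0.
Qed.

Section DoubleCount.
Variables (n p q : nat) (f g : boolfun n).
Hypothesis pq : (p + q = n)%N.
Hypothesis homog_f : forall S, anf f S != 0 -> #|S| = p.
Hypothesis anf_g : forall S, anf g S = anf f (~: S).

Let homog_g := complement_homog pq homog_f anf_g.

Lemma orth_pair_sym (U : 'M['F_2]_(n, p)) (U' : 'M['F_2]_(n, q)) :
  [&& dsum f U 0 != 0, \rank U' == q & U^T *m U' == 0] =
  [&& dsum g U' 0 != 0, \rank U == p & U'^T *m U == 0].
Proof.
have orthC (A : 'M['F_2]_(n, p)) (B : 'M['F_2]_(n, q)) : (A^T *m B == 0) = (B^T *m A == 0).
  by rewrite -trmx_eq0 trmx_mul trmxK.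
rewrite orthC; apply/and3P/and3P => [[nz /eqP rU' /eqP UU'] | [nz /eqP rU /eqP UU']].
  have rU := dsum_homog_rank homog_f nz.
  have UU'' : U^T *m U' = 0 by apply/eqP; rewrite orthC UU'.
  by rewrite (dsum_dual pq rU rU' UU'' homog_f anf_g) nz rU eqxx UU'.
have rU' := dsum_homog_rank homog_g nz.
have UU'' : U^T *m U' = 0 by apply/eqP; rewrite orthC UU'.
by rewrite -(dsum_dual pq rU rU' UU'' homog_f anf_g) nz rU' eqxx UU'.
Qed.

Lemma double_count : (nz_dsums0 p f * num_GL q = nz_dsums0 q g * num_GL p)%N.
Proof.
transitivity (\sum_(U : 'M['F_2]_(n, p)) \sum_(U' : 'M['F_2]_(n, q))
   [&& dsum f U 0%R != 0%R, \rank U' == q & U^T *m U' == 0%R])%N.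
  rewrite /nz_dsums0 big_distrl /=; apply: eq_bigr => U _.
  case: (boolP (dsum f U 0 != 0)) => nz /=; last by rewrite mul0n big1.
  rewrite mul1n -card_set_sum; apply: esym; apply: card_perp_bases pq _.
  exact: dsum_homog_rank homog_f nz.
under eq_bigr => U _ do under eq_bigr => U' _ do rewrite orth_pair_sym.
rewrite exchange_big /= /nz_dsums0 big_distrl /=; apply: eq_bigr => U' _.
case: (boolP (dsum g U' 0 != 0)) => nz /=; last by rewrite mul0n big1.
rewrite mul1n -card_set_sum; apply: (card_perp_bases _ (dsum_homog_rank homog_g nz)).
by rewrite addnC pq.
Qed.

End DoubleCount.

Section AffineANF.
Variable n : nat.

Lemma mobius_coord (g : boolfun n) (S : {set 'I_n}) :
  mobius g S = \sum_(c : 'cV['F_2]_#|S|) g (coord_mx S *m c).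
Proof.
rewrite ffunE (reindex (@vsupp n)) /=; last first.
  by exists (@vec_of_set n) => [x _|T _]; rewrite ?vec_of_setK ?vsuppK.
under eq_bigr => x _ do rewrite vec_of_setK.
rewrite (reindex (fun c : 'cV['F_2]_#|S| => coord_mx S *m c)) /=; last first.
  exists (fun x : vec n => (coord_mx S)^T *m x) => [c _|x].
    by rewrite mulmxA coord_mxTK mul1mx.
  rewrite inE => /subsetP sx; apply/matrixP => i j; rewrite (ord1 j).
  case: (boolP (i \in S)) => iS.
    by rewrite -(enum_rankK_in iS iS) coord_mx_mul_in coord_mxT_mul.
  rewrite coord_mx_mul_out //; apply: esym; apply: F2_neq1; apply: contra iS => xi.
  by apply: sx; rewrite inE.
apply: eq_bigl => c; apply/subsetP => i; rewrite inE; apply: contraLR => iS.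
by rewrite coord_mx_mul_out.
Qed.

Lemma anf_affine_comp (F : boolfun n) (M : 'M['F_2]_n) v (S : {set 'I_n}) :
  anf (affine_comp F M v) S = dsum F (M *m coord_mx S) v.
Proof.
rewrite anfE mobius_coord /dsum.
by apply: eq_bigr => c _; rewrite /affine_comp mulmxA.
Qed.

Lemma rank_unit_mul p (M : 'M['F_2]_n) (B : 'M['F_2]_(n, p)) :
  M \in unitmx -> \rank (M *m B) = \rank B.
Proof.
move=> uM; apply/eqP; rewrite eqn_leq mxrankM_maxr /=.
by rewrite -{1}(mulKmx uM B) mxrankM_maxr.
Qed.

(* The contragredient M^-T, which turns M-images of coordinate subspaces into
   orthogonal complements of each other. *)
Definition dual_mx (M : 'M['F_2]_n) := (invmx M)^T.

Lemma dual_mxK : involutive dual_mx.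
Proof. by move=> M; rewrite /dual_mx trmx_inv trmxK invmxK. Qed.

Lemma dual_mx_unit M : (dual_mx M \in unitmx) = (M \in unitmx).
Proof. by rewrite /dual_mx unitmx_tr unitmx_inv. Qed.

Lemma dual_mx_orth (M : 'M['F_2]_n) (S : {set 'I_n}) : M \in unitmx ->
  (M *m coord_mx S)^T *m (dual_mx M *m coord_mx (~: S)) = 0.
Proof.
move=> uM; rewrite trmx_mul /dual_mx -mulmxA (mulmxA M^T) -trmx_mul mulVmx // trmx1 mul1mx.
by rewrite coord_mxT_disjoint // disjoints_subset setCK subxx.
Qed.

End AffineANF.

Section Complement.
Variables (n k : nat) (f : boolfun n).
Hypothesis k_gt0 : (0 < k)%N.
Hypothesis k_le_half : (2 * k <= n)%N.
Hypothesis homog_f : forall S, anf f S != 0 -> #|S| = k.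

Local Notation q := (n - k)%N.

Lemma k_le_n : (k <= n)%N. Proof. by apply: leq_trans k_le_half; rewrite leq_pmull. Qed.
Lemma k_le_q : (k <= q)%N. Proof. by rewrite leq_subRL ?k_le_n // addnn -mul2n. Qed.
Lemma k_add_q : (k + q = n)%N. Proof. by rewrite subnKC ?k_le_n. Qed.

Let homog_fc := complement_homog k_add_q homog_f (anf_complement f).

Lemma dt_complement :
  dt q (complement f) = dt k f * \prod_(k.+1 <= i < (n.+1 - k)%N) (1 - ((2 ^ i)%N%:R)^-1 : rat).
Proof.
rewrite !dt_count (nz_dsums_base_free (deg_le_homog homog_f)).
rewrite (nz_dsums_base_free (deg_le_homog homog_fc)) subSn ?k_le_n //.
set P2 := \prod_(k.+1 <= i < q.+1) _.
have q_gt0 : (0 < q)%N by apply: leq_trans k_gt0 k_le_q.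
have Gk := num_GLE k_gt0; have Gq := num_GLE q_gt0.
rewrite (@big_cat_nat _ _ _ k.+1) //= in Gq; last by rewrite ltnS k_le_q.
set P1 := \prod_(1 <= i < k.+1) _ in Gk Gq; rewrite -/P2 in Gq.
have := double_count k_add_q homog_f (anf_complement f).
move/(congr1 (fun x : nat => x%:R : rat)); rewrite !natrM => E.
have Gk0 : (num_GL k)%:R != 0 :> rat by rewrite pnatr_eq0 -lt0n num_GL_gt0.
have P10 : P1 != 0 by apply: contraNneq Gk0 => P0; rewrite Gk P0 mulr0.
set A := (nz_dsums0 k f)%:R in E *; set Ac := (nz_dsums0 q _)%:R in E *.
have EA : Ac = A * 2%:R ^+ (q * q) * P2 / 2%:R ^+ (k * k).
  by apply: (mulIf Gk0); rewrite -E Gq Gk; field; rewrite expf_neq0.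
rewrite EA !natrX.
set d := (q - k)%N.
have E1 : (q * q = k * k + d * n)%N by have := k_add_q; have := k_le_q; rewrite /d; nia.
have E2 : ((q + 1) * n = (k + 1) * n + d * n)%N.
  by have := k_add_q; have := k_le_q; rewrite /d; nia.
rewrite E1 E2 !exprD.
have h2 : (2%:R : rat) != 0 by [].
field; by rewrite ?expf_neq0.
Qed.

Lemma anf_affine_complement (M : 'M['F_2]_n) v (S : {set 'I_n}) : M \in unitmx -> #|S| = k ->
  anf (affine_comp (complement f) (dual_mx M) v) (~: S) = anf (affine_comp f M v) S.
Proof.
move=> uM Sk; have Sq : #|~: S| = q by apply: card_setC_eq k_add_q Sk.
have deg_S : deg_le #|S| f by move=> R /homog_f ->; rewrite Sk.
have deg_Sc : deg_le #|~: S| (complement f) by move=> R /homog_fc ->; rewrite Sq.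
rewrite !anf_affine_comp (dsum_base_free _ _ deg_S) (dsum_base_free _ _ deg_Sc).
have Sn : (#|S| + #|~: S| = n)%N by rewrite cardsC card_ord.
apply: (dsum_dual Sn) (anf_complement f).
- by rewrite rank_unit_mul ?rank_coord_mx.
- by rewrite rank_unit_mul ?rank_coord_mx ?dual_mx_unit.
- exact: dual_mx_orth.
- by move=> R /homog_f ->.
Qed.

Lemma ddk_affine_complement (M : 'M['F_2]_n) v : M \in unitmx ->
  ddk q (affine_comp (complement f) (dual_mx M) v) = ddk k (affine_comp f M v).
Proof.
move=> uM; rewrite /ddk bin_sub ?k_le_n //; congr (_%:R / _).
rewrite !card_set_sum (reindex_inj (@setC_inj _)) /=; apply: eq_bigr => S _.
case: (eqVneq #|S| k) => [Sk|nSk].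
  by rewrite (card_setC_eq k_add_q Sk) eqxx anf_affine_complement.
suff -> : (#|~: S| == q) = false by [].
have Sn : (#|S| + #|~: S| = n)%N by rewrite cardsC card_ord.
by apply/negbTE; apply: contra nSk => /eqP E; apply/eqP; move: Sn k_le_n; rewrite E; lia.
Qed.

(* Reindexing the average over the affine group by M |-> M^-T. *)
Lemma addk_complement : addk q (complement f) = addk k f.
Proof.
rewrite /addk; congr (_ / _).
rewrite (reindex_inj (inv_inj (@dual_mxK n))) /=.
apply: eq_big => [M|M uM]; first by rewrite dual_mx_unit.
by apply: eq_bigr => v _; rewrite ddk_affine_complement // -dual_mx_unit.
Qed.

End Complement.

Theorem proposition2 :
  (forall (n k : nat) (f : boolfun n),
      (1 <= k)%N -> (k <= n)%N -> alg_deg f = k ->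
      dt k.+1 (extend_mul f) = (1 - ((2 ^ k.+1)%N%:R)^-1) * dt k f)
  /\
  (forall (n k : nat) (f : boolfun n),
      (1 <= k)%N -> (2 * k <= n)%N -> homogeneous k f ->
      addk (n - k)%N (complement f) = addk k f /\
      dt (n - k)%N (complement f) =
        dt k f * \prod_(k.+1 <= i < (n.+1 - k)%N) (1 - ((2 ^ i)%N%:R)^-1 : rat)).
Proof.
split=> [n k f _ _ deg_f | n k f k_gt0 k_le_half [_ homog_f]].
  apply: dt_extend_mul => S nzS; rewrite -deg_f.
  exact: (@leq_bigmax_cond _ (fun S => anf f S != 0) (fun S => #|S|) S nzS).
by split; [apply: addk_complement | apply: dt_complement].
Qed.
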